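(* The category $\mathsf{HSLat}$ of Heyting semilattices satisfies the condition (SSH): for every Heyting semilattice $B$, the kernel functor $\mathrm{Ker}_B\colon \mathsf{Pt}_B(\mathsf{HSLat})\to\mathsf{HSLat}$ reflects Huq-commuting pairs of morphisms. Explicitly: given points $(A_1,\alpha_1,\beta_1)$, $(A_2,\alpha_2,\beta_2)$, $(A,\alpha,\beta)$ over $B$ and morphisms of points $v_1\colon(A_1,\alpha_1,\beta_1)\to(A,\alpha,\beta)$, $v_2\colon(A_2,\alpha_2,\beta_2)\to(A,\alpha,\beta)$, if the restrictions $\mathrm{Ker}_B(v_1)\colon \mathrm{Ker}(\alpha_1)\to\mathrm{Ker}(\alpha)$ and $\mathrm{Ker}_B(v_2)\colon\mathrm{Ker}(\alpha_2)\to\mathrm{Ker}(\alpha)$ Huq-commute in $\mathsf{HSLat}$, then $v_1$ and $v_2$ Huq-commute in $\mathsf{Pt}_B(\mathsf{HSLat})$.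
   Context: A Heyting semilattice is a meet-semilattice $(H,\wedge)$ with top element $1$ and a binary operation $\Rightarrow$ such that $x\wedge y\le z$ iff $x\le y\Rightarrow z$; morphisms preserve $1$, $\wedge$ and $\Rightarrow$. $\mathsf{HSLat}$ is the resulting category (a pointed variety, zero object $\{1\}$). For an object $B$, $\mathsf{Pt}_B(\mathsf{HSLat})$ is the category of points over $B$: triples $(A,\alpha,\beta)$ with $\alpha\colon A\to B$, $\beta\colon B\to A$, $\alpha\beta=1_B$; morphisms $f\colon(A,\alpha,\beta)\to(A',\alpha',\beta')$ satisfy $\alpha' f=\alpha$, $f\beta=\beta'$. Its zero object is $(B,1_B,1_B)$. $\mathrm{Ker}_B$ sends $(A,\alpha,\beta)$ to $\mathrm{Ker}(\alpha)$. In a pointed category with finite products, two morphisms $f\colon X\to A$, $g\colon Y\to A$ Huq-commute if there is a morphism $\varphi\colon X\times Y\to A$ with $\varphi\circ(1_X,0)=f$ and $\varphi\circ(0,1_Y)=g$. *)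

From Stdlib Require Import ProofIrrelevance.
Set Implicit Arguments.
Unset Strict Implicit.

(** A Heyting semilattice: meet-semilattice (H, meet) with top and an
    implication adjoint to meet; the order is x <= y :<-> meet x y = x. *)
Record HSLat := {
  car :> Type;
  hmeet : car -> car -> car;
  htop : car;
  himp : car -> car -> car;
  hmeetA : forall x y z, hmeet x (hmeet y z) = hmeet (hmeet x y) z;
  hmeetC : forall x y, hmeet x y = hmeet y x;
  hmeetxx : forall x, hmeet x x = x;
  hmeetx1 : forall x, hmeet x htop = x;
  himpP : forall x y z,
      hmeet (hmeet x y) z = hmeet x y <-> hmeet x (himp y z) = x
}.
Arguments hmeet {h}. Arguments htop {h}. Arguments himp {h}.

Record hom (X Y : HSLat) := {
  hfun :> X -> Y;
  hom1 : hfun htop = htop;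
  homM : forall x y, hfun (hmeet x y) = hmeet (hfun x) (hfun y);
  homI : forall x y, hfun (himp x y) = himp (hfun x) (hfun y)
}.

Definition prodH (X Y : HSLat) : HSLat.
Proof.
refine {| car := (X * Y)%type;
          hmeet := fun p q => (hmeet (fst p) (fst q), hmeet (snd p) (snd q));
          htop := (htop, htop);
          himp := fun p q => (himp (fst p) (fst q), himp (snd p) (snd q)) |}.
- intros [] [] []; simpl; now rewrite !hmeetA.
- intros [] []; simpl; now rewrite (@hmeetC X c), (@hmeetC Y c0).
- intros []; simpl; now rewrite !hmeetxx.
- intros []; simpl; now rewrite !hmeetx1.
- intros [x1 x2] [y1 y2] [z1 z2]; simpl; split; intro H; injection H; intros H2 H1;
    f_equal; apply himpP; assumption.
Defined.

Lemma sig_eq (A : Type) (P : A -> Prop) (x y : {a | P a}) :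
  proj1_sig x = proj1_sig y -> x = y.
Proof.
destruct x, y; simpl; intros ->; f_equal; apply proof_irrelevance.
Qed.

Definition subH (X : HSLat) (P : X -> Prop)
  (Pm : forall x y, P x -> P y -> P (hmeet x y)) (P1 : P htop)
  (Pi : forall x y, P x -> P y -> P (himp x y)) : HSLat.
Proof.
refine {| car := {x : X | P x};
          hmeet := fun x y => exist P (hmeet (proj1_sig x) (proj1_sig y))
                                 (Pm _ _ (proj2_sig x) (proj2_sig y));
          htop := exist P htop P1;
          himp := fun x y => exist P (himp (proj1_sig x) (proj1_sig y))
                                 (Pi _ _ (proj2_sig x) (proj2_sig y)) |}.
- intros; apply sig_eq; simpl; apply hmeetA.
- intros; apply sig_eq; simpl; apply hmeetC.
- intros; apply sig_eq; simpl; apply hmeetxx.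
- intros; apply sig_eq; simpl; apply hmeetx1.
- intros x y z; split; intro H.
  + apply sig_eq; simpl; apply himpP; exact (f_equal (@proj1_sig _ _) H).
  + apply sig_eq; simpl; apply himpP; exact (f_equal (@proj1_sig _ _) H).
Defined.

Lemma himp11 (X : HSLat) : himp (@htop X) htop = htop.
Proof.
assert (H : hmeet htop (himp (@htop X) htop) = htop).
{ apply himpP; now rewrite !hmeetx1. }
now rewrite hmeetC, hmeetx1 in H.
Qed.

Definition kerH (A B : HSLat) (f : hom A B) : HSLat.
Proof.
refine (@subH A (fun a => f a = htop) _ _ _).
- intros x y Hx Hy; now rewrite homM, Hx, Hy, hmeetx1.
- apply hom1.
- intros x y Hx Hy; now rewrite homI, Hx, Hy, himp11.
Defined.

Record point (B : HSLat) := {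
  pA : HSLat;
  palpha : hom pA B;
  pbeta : hom B pA;
  psplit : forall b, palpha (pbeta b) = b
}.

Record pthom (B : HSLat) (P Q : point B) := {
  pf :> hom (pA P) (pA Q);
  pf_alpha : forall a, palpha Q (pf a) = palpha P a;
  pf_beta : forall b, pf (pbeta P b) = pbeta Q b
}.

Definition kerMap (B : HSLat) (P Q : point B) (v : pthom P Q) :
  hom (kerH (palpha P)) (kerH (palpha Q)).
Proof.
refine (@Build_hom (kerH (palpha P)) (kerH (palpha Q))
          (fun k => exist (fun a => palpha Q a = htop) (v (proj1_sig k))
                      (eq_trans (pf_alpha v _) (proj2_sig k))) _ _ _).
- apply sig_eq; simpl; apply hom1.
- intros; apply sig_eq; simpl; apply homM.
- intros; apply sig_eq; simpl; apply homI.
Defined.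

(** Huq commutation in HSLat (zero morphisms are constantly 1, the product is prodH). *)
Definition huqH (X Y A : HSLat) (f : hom X A) (g : hom Y A) : Prop :=
  exists phi : hom (prodH X Y) A,
    (forall x, phi (x, htop) = f x) /\ (forall y, phi (htop, y) = g y).

(** Binary product in Pt_B: the pullback A1 x_B A2. *)
Definition pbH (B : HSLat) (P Q : point B) : HSLat.
Proof.
refine (@subH (prodH (pA P) (pA Q))
          (fun p => palpha P (fst p) = palpha Q (snd p)) _ _ _).
- intros [x1 x2] [y1 y2]; simpl; intros Hx Hy; now rewrite !homM, Hx, Hy.
- simpl; now rewrite !hom1.
- intros [x1 x2] [y1 y2]; simpl; intros Hx Hy; now rewrite !homI, Hx, Hy.
Defined.

Definition pb_alpha (B : HSLat) (P Q : point B) : hom (pbH P Q) B.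
Proof.
refine {| hfun := fun p : pbH P Q => palpha P (fst (proj1_sig p)) |}.
- apply hom1.
- intros; apply homM.
- intros; apply homI.
Defined.

Definition pb_beta (B : HSLat) (P Q : point B) : hom B (pbH P Q).
Proof.
refine (@Build_hom B (pbH P Q)
   (fun b => exist (fun p => palpha P (fst p) = palpha Q (snd p))
               (pbeta P b, pbeta Q b) (eq_trans (psplit P b) (eq_sym (psplit Q b)))) _ _ _).
- apply sig_eq; simpl; now rewrite !hom1.
- intros; apply sig_eq; simpl; now rewrite !homM.
- intros; apply sig_eq; simpl; now rewrite !homI.
Defined.

Definition prodPt (B : HSLat) (P Q : point B) : point B.
Proof.
refine {| pA := pbH P Q; palpha := pb_alpha P Q; pbeta := pb_beta P Q |}.
intro b; simpl; apply psplit.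
Defined.

(** The morphisms (1, 0) and (0, 1) into the product in Pt_B; the zero
    morphism P -> Q in Pt_B is beta_Q . alpha_P. *)
Definition pt_inl (B : HSLat) (P Q : point B) (x : pA P) : pA (prodPt P Q) :=
  exist _ (x, pbeta Q (palpha P x)) (eq_sym (psplit Q (palpha P x))).
Definition pt_inr (B : HSLat) (P Q : point B) (y : pA Q) : pA (prodPt P Q) :=
  exist _ (pbeta P (palpha Q y), y) (psplit P (palpha Q y)).

Definition huqPt (B : HSLat) (P1 P2 P : point B)
  (v1 : pthom P1 P) (v2 : pthom P2 P) : Prop :=
  exists phi : pthom (prodPt P1 P2) P,
    (forall x, phi (pt_inl P2 x) = v1 x) /\ (forall y, phi (pt_inr P1 y) = v2 y).

(* The comparison morphism sends (a1, a2) in A1 ×_B A2, with common base q := β(α1 a1) = β(α2 a2),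
   to glue x y q = ((x ⇒ q) ⇒ y) ⊓ ((y ⇒ q) ⇒ x), where x = v1 a1 and y = v2 a2.  It equals x
   when y = q and y when x = q, which gives the point conditions and the restrictions to the two
   injections.  Below x ⇔ q it agrees with y and below y ⇔ q with x.  These two regions are images
   of kernel elements, and Huq commutation of the kernels says v1 k1 ⇒ v2 k2 = v2 k2 for kernel
   elements k1, k2; this is exactly what allows an inequality whose target lies in the image of v2
   (resp. v1) to be checked separately below the two regions.  Computing region by region then
   shows that glue preserves ⊓ and ⇒. *)


Infix "⊓" := hmeet (at level 40, left associativity).
Infix "⇒" := himp (at level 55, right associativity).

Definition hle {H : HSLat} (x y : H) : Prop := x ⊓ y = x.
Notation "x ≤ y" := (hle x y) (at level 70, no associativity).

Definition hiff {H : HSLat} (x y : H) : H := (x ⇒ y) ⊓ (y ⇒ x).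

Section Order.
Context {H : HSLat}.
Implicit Types a g w x y z q : H.

Lemma le_refl x : x ≤ x.
Proof. apply hmeetxx. Qed.

Lemma le_trans x y z : x ≤ y -> y ≤ z -> x ≤ z.
Proof. unfold hle; intros Hxy Hyz. now rewrite <- Hxy, <- hmeetA, Hyz. Qed.

Lemma le_antisym x y : x ≤ y -> y ≤ x -> x = y.
Proof. unfold hle; intros Hxy Hyx. now rewrite <- Hxy, hmeetC. Qed.

Lemma meet_le_l x y : x ⊓ y ≤ x.
Proof. unfold hle. now rewrite (hmeetC x y), <- hmeetA, hmeetxx. Qed.

Lemma meet_le_r x y : x ⊓ y ≤ y.
Proof. unfold hle. now rewrite <- hmeetA, hmeetxx. Qed.

Lemma meet_le_of_l x y z : x ≤ z -> x ⊓ y ≤ z.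
Proof. intro Hxz. apply le_trans with x; [apply meet_le_l | exact Hxz]. Qed.

Lemma meet_le_of_r x y z : y ≤ z -> x ⊓ y ≤ z.
Proof. intro Hyz. apply le_trans with y; [apply meet_le_r | exact Hyz]. Qed.

Lemma le_meetP z x y : z ≤ x ⊓ y <-> z ≤ x /\ z ≤ y.
Proof.
split.
- intro Hz. split; apply le_trans with (x ⊓ y); auto using meet_le_l, meet_le_r.
- unfold hle; intros [Hx Hy]. now rewrite hmeetA, Hx, Hy.
Qed.

Lemma le_top x : x ≤ htop.
Proof. apply hmeetx1. Qed.

Lemma meet1x x : htop ⊓ x = x.
Proof. now rewrite hmeetC, hmeetx1. Qed.

Lemma le_impI z x y : z ⊓ x ≤ y -> z ≤ x ⇒ y.
Proof. apply himpP. Qed.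

Lemma le_impE z x y : z ≤ x ⇒ y -> z ⊓ x ≤ y.
Proof. apply himpP. Qed.

Lemma le_mp w x y : w ≤ x -> w ≤ x ⇒ y -> w ≤ y.
Proof.
intros Hx Hxy. apply le_trans with ((x ⇒ y) ⊓ x).
- apply le_meetP; split; assumption.
- apply le_impE, le_refl.
Qed.

Lemma le_imp_weaken x y : y ≤ x ⇒ y.
Proof. apply le_impI, meet_le_l. Qed.

Lemma top_le_imp x y : x ≤ y -> htop ≤ x ⇒ y.
Proof. intro Hxy. apply le_impI. now rewrite meet1x. Qed.

Lemma imp_xx x : x ⇒ x = htop.
Proof. apply le_antisym; [apply le_top | apply top_le_imp, le_refl]. Qed.

Lemma imp_1x x : htop ⇒ x = x.
Proof.
apply le_antisym.
- apply le_mp with htop; [apply le_top | apply le_refl].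
- apply le_imp_weaken.
Qed.

Lemma imp_x1 x : x ⇒ htop = htop.
Proof. apply le_antisym; [apply le_top | apply le_imp_weaken]. Qed.

End Order.

Ltac meet_le :=
  first [ apply le_refl | apply meet_le_of_l; meet_le | apply meet_le_of_r; meet_le ].
Ltac hsolve := repeat (apply le_meetP; split); meet_le.

Definition covers {H : HSLat} (a g z : H) : Prop := a ⇒ ((g ⇒ z) ⇒ z) = (g ⇒ z) ⇒ z.

Definition glue {H : HSLat} (x y q : H) : H := ((x ⇒ q) ⇒ y) ⊓ ((y ⇒ q) ⇒ x).

Section Glue.
Context {H : HSLat}.
Implicit Types a g w x y z q : H.

Lemma le_of_covers a g z w : covers a g z -> a ⊓ w ≤ z -> g ⊓ w ≤ z -> w ≤ z.
Proof.
intros Hcov Ha Hg.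
apply le_mp with (g ⇒ z).
- apply le_impI. now rewrite hmeetC.
- rewrite <- Hcov. apply le_impI. apply le_trans with z.
  + now rewrite hmeetC.
  + apply le_imp_weaken.
Qed.

Lemma glue_sym x y q : glue x y q = glue y x q.
Proof. apply hmeetC. Qed.

Lemma meet_glue_le_r a x y q : a ≤ x ⇒ q -> a ⊓ glue x y q ≤ y.
Proof.
intro Ha. apply le_mp with (x ⇒ q).
- apply meet_le_of_l, Ha.
- unfold glue. hsolve.
Qed.

Lemma meet_glue_le_l g x y q : g ≤ y ⇒ q -> g ⊓ glue x y q ≤ x.
Proof. rewrite glue_sym. apply meet_glue_le_r. Qed.

Lemma meet_le_glue_r a x y q : a ≤ q ⇒ x -> a ⊓ y ≤ glue x y q.
Proof.
intro Ha. unfold glue. apply le_meetP; split; apply le_impI.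
- hsolve.
- apply le_mp with q.
  + apply le_mp with y; hsolve.
  + apply meet_le_of_l, meet_le_of_l, Ha.
Qed.

Lemma meet_le_glue_l g x y q : g ≤ q ⇒ y -> g ⊓ x ≤ glue x y q.
Proof. rewrite glue_sym. apply meet_le_glue_r. Qed.

Lemma le_glue_half a g x y q w :
  covers a g y -> g ≤ q ⇒ y -> a ⊓ w ≤ y -> g ⊓ w ≤ x -> w ≤ (x ⇒ q) ⇒ y.
Proof.
intros Hcov Hg Haw Hgw. apply le_impI, le_of_covers with a g; [exact Hcov | |].
- apply le_trans with (a ⊓ w); [hsolve | exact Haw].
- apply le_mp with q.
  + apply le_mp with x; [apply le_trans with (g ⊓ w); [hsolve | exact Hgw] | hsolve].
  + apply meet_le_of_l, Hg.
Qed.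

Lemma le_glue a g x y q w :
  covers a g y -> covers g a x -> a ≤ q ⇒ x -> g ≤ q ⇒ y ->
  a ⊓ w ≤ y -> g ⊓ w ≤ x -> w ≤ glue x y q.
Proof.
intros. apply le_meetP; split; [apply le_glue_half with a g | apply le_glue_half with g a];
  assumption.
Qed.

Lemma glue_base_r x q : glue x q q = x.
Proof.
assert (Hqq : htop ≤ q ⇒ q) by (apply top_le_imp, le_refl).
apply le_antisym.
- rewrite <- (meet1x (glue x q q)). apply meet_glue_le_l, Hqq.
- apply le_trans with (htop ⊓ x); [rewrite meet1x; apply le_refl | apply meet_le_glue_l, Hqq].
Qed.

Lemma glue_base_l y q : glue q y q = y.
Proof. rewrite glue_sym. apply glue_base_r. Qed.

End Glue.

Section GlueMorphism.
Context {H : HSLat}.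
Implicit Types c x q : H.

Lemma hiff_le_l c x q : c ≤ hiff x q -> c ≤ x ⇒ q.
Proof. intro Hc. exact (proj1 (proj1 (le_meetP _ _ _) Hc)). Qed.

Lemma hiff_le_r c x q : c ≤ hiff x q -> c ≤ q ⇒ x.
Proof. intro Hc. exact (proj2 (proj1 (le_meetP _ _ _) Hc)). Qed.

Lemma hiff_meet c x q x' q' :
  c ≤ hiff x q -> c ≤ hiff x' q' -> c ≤ hiff (x ⊓ x') (q ⊓ q').
Proof.
intros Hc Hc'. apply le_trans with (hiff x q ⊓ hiff x' q'); [apply le_meetP; auto |].
unfold hiff. apply le_meetP; split; apply le_impI, le_meetP; split.
- apply le_mp with x; hsolve.
- apply le_mp with x'; hsolve.
- apply le_mp with q; hsolve.
- apply le_mp with q'; hsolve.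
Qed.

Lemma hiff_imp c x q x' q' :
  c ≤ hiff x q -> c ≤ hiff x' q' -> c ≤ hiff (x ⇒ x') (q ⇒ q').
Proof.
intros Hc Hc'. apply le_trans with (hiff x q ⊓ hiff x' q'); [apply le_meetP; auto |].
unfold hiff. apply le_meetP; split; apply le_impI, le_impI.
- apply le_mp with x'; [| hsolve]. apply le_mp with x; [| hsolve].
  apply le_mp with q; hsolve.
- apply le_mp with q'; [| hsolve]. apply le_mp with q; [| hsolve].
  apply le_mp with x; hsolve.
Qed.

Variables (a g x y q x' y' q' : H).
Hypotheses (Hax : a ≤ hiff x q) (Hax' : a ≤ hiff x' q')
  (Hgy : g ≤ hiff y q) (Hgy' : g ≤ hiff y' q').

Lemma glue_meet :
  covers a g y -> covers a g y' -> covers a g (y ⊓ y') ->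
  covers g a x -> covers g a x' -> covers g a (x ⊓ x') ->
  glue (x ⊓ x') (y ⊓ y') (q ⊓ q') = glue x y q ⊓ glue x' y' q'.
Proof.
intros Cy Cy' Cyy Cx Cx' Cxx.
pose proof (hiff_meet _ _ _ _ _ Hax Hax') as Haxx.
pose proof (hiff_meet _ _ _ _ _ Hgy Hgy') as Hgyy.
apply le_antisym; [apply le_meetP; split |].
- apply le_glue with a g; auto using hiff_le_r.
  + apply le_trans with (y ⊓ y'); [apply meet_glue_le_r, hiff_le_l, Haxx | hsolve].
  + apply le_trans with (x ⊓ x'); [apply meet_glue_le_l, hiff_le_l, Hgyy | hsolve].
- apply le_glue with a g; auto using hiff_le_r.
  + apply le_trans with (y ⊓ y'); [apply meet_glue_le_r, hiff_le_l, Haxx | hsolve].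
  + apply le_trans with (x ⊓ x'); [apply meet_glue_le_l, hiff_le_l, Hgyy | hsolve].
- apply le_glue with a g; auto using hiff_le_r; apply le_meetP; split.
  + apply le_trans with (a ⊓ glue x y q); [hsolve | apply meet_glue_le_r, hiff_le_l, Hax].
  + apply le_trans with (a ⊓ glue x' y' q'); [hsolve | apply meet_glue_le_r, hiff_le_l, Hax'].
  + apply le_trans with (g ⊓ glue x y q); [hsolve | apply meet_glue_le_l, hiff_le_l, Hgy].
  + apply le_trans with (g ⊓ glue x' y' q'); [hsolve | apply meet_glue_le_l, hiff_le_l, Hgy'].
Qed.

Lemma glue_imp :
  covers a g y' -> covers a g (y ⇒ y') -> covers g a x' -> covers g a (x ⇒ x') ->
  glue (x ⇒ x') (y ⇒ y') (q ⇒ q') = glue x y q ⇒ glue x' y' q'.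
Proof.
intros Cy' Cyy Cx' Cxx.
pose proof (hiff_imp _ _ _ _ _ Hax Hax') as Haxx.
pose proof (hiff_imp _ _ _ _ _ Hgy Hgy') as Hgyy.
apply le_antisym.
- apply le_impI, le_glue with a g; auto using hiff_le_r.
  + apply le_mp with y.
    * apply le_trans with (a ⊓ glue x y q); [hsolve | apply meet_glue_le_r, hiff_le_l, Hax].
    * apply le_trans with (a ⊓ glue (x ⇒ x') (y ⇒ y') (q ⇒ q'));
        [hsolve | apply meet_glue_le_r, hiff_le_l, Haxx].
  + apply le_mp with x.
    * apply le_trans with (g ⊓ glue x y q); [hsolve | apply meet_glue_le_l, hiff_le_l, Hgy].
    * apply le_trans with (g ⊓ glue (x ⇒ x') (y ⇒ y') (q ⇒ q'));
        [hsolve | apply meet_glue_le_l, hiff_le_l, Hgyy].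
- apply le_glue with a g; auto using hiff_le_r; apply le_impI.
  + apply le_trans with (a ⊓ glue x' y' q'); [| apply meet_glue_le_r, hiff_le_l, Hax'].
    apply le_meetP; split; [hsolve |]. apply le_mp with (glue x y q); [| hsolve].
    apply le_trans with (a ⊓ y); [hsolve | apply meet_le_glue_r, hiff_le_r, Hax].
  + apply le_trans with (g ⊓ glue x' y' q'); [| apply meet_glue_le_l, hiff_le_l, Hgy'].
    apply le_meetP; split; [hsolve |]. apply le_mp with (glue x y q); [| hsolve].
    apply le_trans with (g ⊓ x); [hsolve | apply meet_le_glue_l, hiff_le_r, Hgy].
Qed.

End GlueMorphism.

Lemma hom_hiff (X Y : HSLat) (f : hom X Y) (x y : X) : f (hiff x y) = hiff (f x) (f y).
Proof. unfold hiff. now rewrite homM, !homI. Qed.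

Lemma hom_glue (X Y : HSLat) (f : hom X Y) (x y q : X) :
  f (glue x y q) = glue (f x) (f y) (f q).
Proof. unfold glue. now rewrite homM, !homI. Qed.

Section HuqImplication.
Context {X Y A : HSLat} {f : hom X A} {g : hom Y A}.
Hypothesis Hfg : huqH f g.

Lemma huqH_imp_lr x y : f x ⇒ g y = g y.
Proof.
destruct Hfg as [phi [Hf Hg]].
rewrite <- Hf, <- Hg, <- homI. f_equal. cbn. now rewrite imp_x1, imp_1x.
Qed.

Lemma huqH_imp_rl x y : g y ⇒ f x = f x.
Proof.
destruct Hfg as [phi [Hf Hg]].
rewrite <- Hf, <- Hg, <- homI. f_equal. cbn. now rewrite imp_x1, imp_1x.
Qed.

End HuqImplication.

Section BaseAgreement.
Context {B : HSLat} {Q R : point B}.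

Definition agree_base (a : pA Q) : pA Q := hiff a (pbeta Q (palpha Q a)).

Lemma palpha_agree_base a : palpha Q (agree_base a) = htop.
Proof.
unfold agree_base. rewrite hom_hiff, psplit. unfold hiff. now rewrite imp_xx, hmeetx1.
Qed.

Lemma palpha_agree_base_meet a a' : palpha Q (agree_base a ⊓ agree_base a') = htop.
Proof. now rewrite homM, !palpha_agree_base, hmeetx1. Qed.

Lemma pthom_agree_base (v : pthom Q R) a :
  v (agree_base a) = hiff (v a) (pbeta R (palpha Q a)).
Proof. unfold agree_base. now rewrite hom_hiff, pf_beta. Qed.

End BaseAgreement.

Section GlueMap.
Context {B : HSLat} {P1 P2 P : point B}.
Variables (v1 : pthom P1 P) (v2 : pthom P2 P).

Definition glue_map (u : pA (prodPt P1 P2)) : pA P :=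
  let (a1, a2) := proj1_sig u in glue (v1 a1) (v2 a2) (pbeta P (palpha P1 a1)).

Lemma glue_map_inl x : glue_map (pt_inl P2 x) = v1 x.
Proof. cbn. rewrite pf_beta. apply glue_base_r. Qed.

Lemma glue_map_inr y : glue_map (pt_inr P1 y) = v2 y.
Proof. cbn. rewrite pf_beta, psplit. apply glue_base_l. Qed.

Lemma glue_map_top : glue_map htop = htop.
Proof. cbn. rewrite !hom1. apply glue_base_r. Qed.

Lemma glue_map_alpha u : palpha P (glue_map u) = palpha (prodPt P1 P2) u.
Proof.
destruct u as [[a1 a2] e]; cbn in *.
rewrite hom_glue, !pf_alpha, psplit, <- e. apply glue_base_r.
Qed.

Lemma glue_map_beta b : glue_map (pbeta (prodPt P1 P2) b) = pbeta P b.
Proof. cbn. rewrite !pf_beta, psplit. apply glue_base_r. Qed.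

Hypothesis Hker : huqH (kerMap v1) (kerMap v2).

Lemma ker_imp_lr k1 k2 :
  palpha P1 k1 = htop -> palpha P2 k2 = htop -> v1 k1 ⇒ v2 k2 = v2 k2.
Proof.
intros e1 e2.
exact (f_equal (@proj1_sig _ _) (huqH_imp_lr Hker (exist _ k1 e1) (exist _ k2 e2))).
Qed.

Lemma ker_imp_rl k1 k2 :
  palpha P1 k1 = htop -> palpha P2 k2 = htop -> v2 k2 ⇒ v1 k1 = v1 k1.
Proof.
intros e1 e2.
exact (f_equal (@proj1_sig _ _) (huqH_imp_rl Hker (exist _ k1 e1) (exist _ k2 e2))).
Qed.

Lemma covers_ker_lr k1 k2 d :
  palpha P1 k1 = htop -> palpha P2 k2 = htop -> covers (v1 k1) (v2 k2) (v2 d).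
Proof.
intros e1 e2. unfold covers. rewrite <- !homI.
apply ker_imp_lr; [exact e1 |]. now rewrite !homI, e2, imp_1x, imp_xx.
Qed.

Lemma covers_ker_rl k1 k2 d :
  palpha P1 k1 = htop -> palpha P2 k2 = htop -> covers (v2 k2) (v1 k1) (v1 d).
Proof.
intros e1 e2. unfold covers. rewrite <- !homI.
apply ker_imp_rl; [| exact e2]. now rewrite !homI, e1, imp_1x, imp_xx.
Qed.

(* The regions are images of [agree_base] elements, which lie in the kernels. *)
Local Ltac region_side e e' :=
  first [ rewrite homM, !pthom_agree_base, ?e, ?e'; hsolve
        | rewrite <- ?homM, <- ?homI;
          first [apply covers_ker_lr | apply covers_ker_rl]; apply palpha_agree_base_meet ].

Lemma glue_map_meet u u' : glue_map (u ⊓ u') = glue_map u ⊓ glue_map u'.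
Proof.
destruct u as [[a1 a2] e], u' as [[a1' a2'] e']; cbn in *. rewrite !homM.
apply glue_meet with (a := v1 (agree_base a1 ⊓ agree_base a1'))
                     (g := v2 (agree_base a2 ⊓ agree_base a2')); region_side e e'.
Qed.

Lemma glue_map_imp u u' : glue_map (u ⇒ u') = glue_map u ⇒ glue_map u'.
Proof.
destruct u as [[a1 a2] e], u' as [[a1' a2'] e']; cbn in *. rewrite !homI.
apply glue_imp with (a := v1 (agree_base a1 ⊓ agree_base a1'))
                    (g := v2 (agree_base a2 ⊓ agree_base a2')); region_side e e'.
Qed.

Definition glue_hom : hom (pA (prodPt P1 P2)) (pA P) :=
  Build_hom glue_map_top glue_map_meet glue_map_imp.

Definition glue_pthom : pthom (prodPt P1 P2) P :=
  @Build_pthom B (prodPt P1 P2) P glue_hom glue_map_alpha glue_map_beta.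

End GlueMap.

Theorem mainTheorem1 :
  forall (B : HSLat) (P1 P2 P : point B) (v1 : pthom P1 P) (v2 : pthom P2 P),
    huqH (kerMap v1) (kerMap v2) -> huqPt v1 v2.
Proof.
intros B P1 P2 P v1 v2 Hker.
exists (glue_pthom v1 v2 Hker). split; [apply glue_map_inl | apply glue_map_inr].
Qed.
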